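(* Let $\Theta$ be a parameter set, let $B(p,\theta)$ and $L(p,\theta)$ be real-valued functions of a distribution $p$ and a parameter $\theta\in\Theta$, and for each $p$ let $\theta^*(p)\in\arg\min_{\theta\in\Theta}B(p,\theta)$. For $\rho_1,\rho_2\ge 0$ and $\eta\in[0,1)$ define $$\mathcal{G}_{\downarrow}(\rho_1,\eta)=\Big\{p:\ \sup_{r\le \frac{p}{1-\eta}} B(r,\theta^*(p))\le\rho_1\Big\},$$ $$\mathcal{G}_{\uparrow}(\rho_1,\rho_2,\eta)=\Big\{p:\ \text{for all }\theta\in\Theta \text{ and all } r\le\tfrac{p}{1-\eta},\ \big(B(r,\theta)\le\rho_1\Rightarrow L(p,\theta)\le\rho_2\big)\Big\},$$ and $\mathcal{G}^{\mathsf{TV}}(\rho_1,\rho_2,\eta)=\mathcal{G}_{\downarrow}(\rho_1,\eta)\cap\mathcal{G}_{\uparrow}(\rho_1,\rho_2,\eta)$. If $2\epsilon\le\eta<1$, then $$\sup_{p_1,p_2\in\mathcal{G}^{\mathsf{TV}}(\rho_1,\rho_2,\eta):\ \mathsf{TV}(p_1,p_2)\le 2\epsilon} L(p_1,\theta^*(p_2))\le\rho_2 .$$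
   Context: For distributions $r,p$ and $\eta\in[0,1)$, $r\le \frac{p}{1-\eta}$ means $r$ is a probability distribution with $r(A)\le p(A)/(1-\eta)$ for all measurable $A$. $\mathsf{TV}(p,q)=\sup_A|p(A)-q(A)|$. The left-hand side of the conclusion is called the modulus of continuity of $\mathcal{G}^{\mathsf{TV}}(\rho_1,\rho_2,\eta)$ at level $2\epsilon$ under $\mathsf{TV}$ and loss $L$. *)

From mathcomp Require Import all_boot all_order all_algebra.
From mathcomp Require Import all_classical all_reals all_analysis.
Import Order.TTheory GRing.Theory Num.Theory.
Local Open Scope classical_set_scope.
Local Open Scope ring_scope.

Section Defs.
Context {d : measure_display} {T : measurableType d} {R : realType}.

Definition dominated_by (eta : R) (r p : probability T R) : Prop :=
  forall A, measurable A -> (r A <= p A * ((1 - eta)^-1)%:E)%E.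

Definition TV (p q : probability T R) : \bar R :=
  ereal_sup [set x | exists A, measurable A /\ x = `|(p A - q A)%E|%E].

Context {Theta : Type}.
Variables (B L : probability T R -> Theta -> R)
          (theta_star : probability T R -> Theta).

Definition G_down (rho1 eta : R) : set (probability T R) :=
  [set p | (ereal_sup [set x | exists r, dominated_by eta r p /\
                                   x = (B r (theta_star p))%:E]
             <= rho1%:E)%E].

Definition G_up (rho1 rho2 eta : R) : set (probability T R) :=
  [set p | forall (theta : Theta) (r : probability T R),
       dominated_by eta r p -> B r theta <= rho1 -> L p theta <= rho2].

Definition G_TV (rho1 rho2 eta : R) : set (probability T R) :=
  G_down rho1 eta `&` G_up rho1 rho2 eta.

End Defs.

From Pilot Require Import Defs.
From mathcomp Require Import all_boot all_order all_algebra.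
From mathcomp Require Import all_classical all_reals all_analysis.
Import Order.TTheory GRing.Theory Num.Theory.
Local Open Scope classical_set_scope.
Local Open Scope ring_scope.

(** If TV(p1, p2) <= eta < 1, the common part m = p1 /\ p2 of the two
   distributions (read off a Hahn decomposition of p1 - p2) has mass at
   least 1 - TV(p1, p2) >= 1 - eta, so its normalisation r satisfies both
   r <= p1/(1-eta) and r <= p2/(1-eta).  Since p2 is in G_down,
   B(r, theta*(p2)) <= rho1, and since p1 is in G_up this forces
   L(p1, theta*(p2)) <= rho2. *)

Section common_part.
Context {d : measure_display} {T : measurableType d} {R : realType}.
Local Open Scope ereal_scope.

Lemma dominated_by_mnormalize (eta : R) (p q : probability T R)
    (m : {measure set T -> \bar R}) :
  (eta < 1)%R -> (forall A, measurable A -> m A <= p A) ->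
  (1 - eta)%:E <= m setT ->
  Defs.dominated_by eta (mnormalize m q) p.
Proof.
move=> eta_lt1 m_le_p m_mass A mA.
have eta1_gt0 : (0 < 1 - eta)%R by rewrite subr_gt0.
have m_fin : m setT \is a fin_num.
  rewrite ge0_fin_numE ?measure_ge0 //.
  by apply: le_lt_trans (m_le_p _ measurableT) _; rewrite probability_setT ltry.
set c := fine (m setT); have cE : m setT = c%:E by rewrite fineK.
have c_ge : (1 - eta <= c)%R by rewrite -lee_fin -cE.
have c_gt0 : (0 < c)%R by apply: lt_le_trans c_ge.
have mnE : mnormalize m q A = m A * (c^-1)%:E.
  by rewrite /mnormalize cE ifF //; apply/negbTE; rewrite negb_or eqe gt_eqF.
rewrite [leLHS]mnE; apply: lee_pmul;
  rewrite ?measure_ge0 ?lee_fin ?invr_ge0 ?(ltW c_gt0) ?m_le_p //.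
by rewrite lef_pV2 ?posrE.
Qed.

Lemma exists_common_minorant (p1 p2 : probability T R) :
  exists m : {measure set T -> \bar R},
    [/\ forall A, measurable A -> m A <= p1 A,
        forall A, measurable A -> m A <= p2 A &
        1 <= m setT + TV p1 p2].
Proof.
pose nu := cadd (charge_of_finite_measure p1)
                (copp (charge_of_finite_measure p2)).
have [P [N [[mP posP] [mN negN] PNT PN0]]] := Hahn_decomposition nu.
have splitNP (q : probability T R) A :
    measurable A -> q A = q (A `&` N) + q (A `&` P).
  move=> mA; rewrite -measureU; last 3 first.
  - exact: measurableI.
  - exact: measurableI.
  - by rewrite setIACA (setIC N) PN0 setI0.
  by rewrite -setIUr setUC PNT setIT.
(* p1 - p2 is <= 0 on N and >= 0 on P, so m takes the smaller of p1, p2 on each piece. *)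
pose m := measure_add (mrestr p1 mN) (mrestr p2 mP).
have mE A : m A = p1 (A `&` N) + p2 (A `&` P) by rewrite /m measure_addE.
have m_le1 A : measurable A -> m A <= p1 A.
  move=> mA; have mAP := measurableI _ _ mA mP.
  rewrite mE [leRHS](splitNP p1) //; apply: leeD2l.
  by rewrite -suber_ge0 ?fin_num_measure //; apply: posP mAP (@subIsetr _ _ _).
have m_le2 A : measurable A -> m A <= p2 A.
  move=> mA; rewrite mE [leRHS](splitNP p2) //; apply: leeD2r.
  by rewrite -sube_le0; apply: negN (measurableI _ _ mA mN) (@subIsetr _ _ _).
have m_mass : 1 <= m setT + TV p1 p2.
  rewrite mE -(probability_setT p1) (splitNP p1) // !setTI -addeA leeD2l //.
  rewrite -leeBlDl ?fin_num_measure //.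
  apply: le_trans (lee_abs _) _; apply: ereal_sup_ubound; by exists P.
by exists m.
Qed.

Lemma exists_dominated_by_both {eta : R} {p1 p2 : probability T R} :
  (eta < 1)%R -> TV p1 p2 <= eta%:E ->
  exists r : probability T R,
    Defs.dominated_by eta r p1 /\ Defs.dominated_by eta r p2.
Proof.
move=> eta_lt1 tv_le; have [m [m_p1 m_p2 m_mass]] := exists_common_minorant p1 p2.
have m1 : (1 - eta)%:E <= m setT.
  by rewrite EFinB leeBlDr //; apply: le_trans m_mass _; apply: leeD2l.
by exists (mnormalize m p1); split; apply: dominated_by_mnormalize.
Qed.

Lemma G_down_dominated {Theta : Type} {B : probability T R -> Theta -> R}
    {theta_star : probability T R -> Theta} {rho1 eta : R}
    {p r : probability T R} :
  G_down B theta_star rho1 eta p -> Defs.dominated_by eta r p ->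
  (B r (theta_star p) <= rho1)%R.
Proof.
move=> p_down r_p; rewrite -lee_fin; apply: le_trans p_down.
by apply: ereal_sup_ubound; exists r.
Qed.

End common_part.

Theorem theorem3p3 (d : measure_display) (T : measurableType d) (R : realType)
  (Theta : Type) (B L : probability T R -> Theta -> R)
  (theta_star : probability T R -> Theta)
  (Hargmin : forall (p : probability T R) (theta : Theta),
      B p (theta_star p) <= B p theta)
  (rho1 rho2 eta eps : R)
  (Hrho1 : 0 <= rho1) (Hrho2 : 0 <= rho2)
  (Heta0 : 0 <= eta) (Heps : 2 * eps <= eta) (Heta1 : eta < 1) :
  (ereal_sup [set x | exists p1 p2 : probability T R,
      [/\ G_TV B L theta_star rho1 rho2 eta p1,
          G_TV B L theta_star rho1 rho2 eta p2,
          (TV p1 p2 <= (2 * eps)%:E)%E &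
          x = (L p1 (theta_star p2))%:E]]
   <= rho2%:E)%E.
Proof.
apply: ge_ereal_sup => _ [p1 [p2 [[_ p1_up] [p2_down _] tv12 ->]]].
have tv_eta : (TV p1 p2 <= eta%:E)%E by apply: le_trans tv12 _; rewrite lee_fin.
have [r [r_p1 r_p2]] := exists_dominated_by_both Heta1 tv_eta.
rewrite lee_fin; apply: (p1_up (theta_star p2) r r_p1).
exact: (G_down_dominated p2_down r_p2).
Qed.
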